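(* Let $(X,d)$ be a complete metric space, $0<\rho<1$, and $\mu(x,y)=x\#y$ a nonexpansive, coordinatewise $\rho$-contractive 2-mean on $X$ satisfying the limited medial property. Let $n\ge2$, $m\in X$, and $\mathbf{x}=(x_1,\ldots,x_n),\mathbf{y}=(y_1,\ldots,y_n)\in X^n$ with $x_i\#y_i=m$ for all $1\le i\le n$. Then $\mu_n(\mathbf{x})\#\mu_n(\mathbf{y})=m$.
   Context: A $k$-mean is a map $\mu:X^k\to X$ with $\mu(x,\ldots,x)=x$. Nonexpansive: $d(\mu(\mathbf{x}),\mu(\mathbf{y}))\le\max_j d(x_j,y_j)$; coordinatewise $\rho$-contractive: $d(\mu(\mathbf{x}),\mu(\mathbf{y}))\le\rho\,d(x_j,y_j)$ when $\mathbf{x},\mathbf{y}$ differ only in coordinate $j$. A 2-mean $\#$ has the limited medial property if $a\#b=x\#y=m$ implies $(a\#x)\#(b\#y)=m$. $\mu_2=\mu$, and $\mu_{n+1}$ is the unique continuous $\beta$-extension of $\mu_n$, where for a $k$-mean $\mu$ the barycentric operator is $\beta(\mathbf{z})_j=\mu(z_1,\ldots,\widehat{z_j},\ldots,z_{k+1})$ and a $(k+1)$-mean $\tilde\mu$ $\beta$-extends $\mu$ if $\beta^r(\mathbf{z})\to(\tilde\mu(\mathbf{z}),\ldots,\tilde\mu(\mathbf{z}))$ for all $\mathbf{z}$. *)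

From mathcomp Require Import all_boot all_order all_algebra.
From mathcomp Require Import reals.
Set Implicit Arguments. Unset Strict Implicit. Unset Printing Implicit Defensive.
Import Order.TTheory GRing.Theory Num.Theory.
Local Open Scope ring_scope.

Section Defs.
Variables (R : realType) (X : Type) (d : X -> X -> R).

Definition is_metric : Prop :=
  (forall x y, d x y = 0 <-> x = y) /\
  (forall x y, d x y = d y x) /\
  (forall x y z, d x z <= d x y + d y z).

Definition seq_conv (u : nat -> X) (l : X) : Prop :=
  forall e : R, 0 < e -> exists N : nat, forall n : nat, (N <= n)%N -> d (u n) l < e.

Definition is_cauchy (u : nat -> X) : Prop :=
  forall e : R, 0 < e -> exists N : nat, forall m n : nat,
    (N <= m)%N -> (N <= n)%N -> d (u m) (u n) < e.

Definition complete_metric : Prop :=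
  forall u : nat -> X, is_cauchy u -> exists l, seq_conv u l.

Definition continuous_k (k : nat) (mu : ('I_k -> X) -> X) : Prop :=
  forall (z : 'I_k -> X) (e : R), 0 < e -> exists2 del : R, 0 < del &
    forall w : 'I_k -> X, (forall j, d (z j) (w j) < del) -> d (mu z) (mu w) < e.

Definition beta (k : nat) (mu : ('I_k -> X) -> X) (z : 'I_k.+1 -> X) : 'I_k.+1 -> X :=
  fun j => mu (fun i => z (lift j i)).

Definition beta_extends (k : nat) (mu : ('I_k -> X) -> X) (mu' : ('I_k.+1 -> X) -> X) : Prop :=
  forall z : 'I_k.+1 -> X, forall j : 'I_k.+1,
    seq_conv (fun r => iter r (beta mu) z j) (mu' z).

Definition is_2mean (op : X -> X -> X) : Prop := forall x, op x x = x.

Definition nonexpansive2 (op : X -> X -> X) : Prop :=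
  forall a b x y, d (op a b) (op x y) <= Num.max (d a x) (d b y).

Definition coord_contractive2 (rho : R) (op : X -> X -> X) : Prop :=
  (forall a x b, d (op a b) (op x b) <= rho * d a x) /\
  (forall a b y, d (op a b) (op a y) <= rho * d b y).

Definition limited_medial (op : X -> X -> X) : Prop :=
  forall a b x y m, op a b = m -> op x y = m -> op (op a x) (op b y) = m.

End Defs.

(** Call a mean fibre-preserving if it maps pairs of tuples lying coordinatewise
    in a fibre [{(a, b) | a # b = m}] to a pair in the same fibre.  [mu_2] is
    fibre-preserving by the limited medial property, and if [mu_n] is, so is
    every iterate of its barycentric operator, coordinatewise.  As [#] is
    nonexpansive its fibres are closed, so the property passes to the limit
    [mu_(n+1)] of these iterates. *)
From mathcomp Require Import all_boot all_order all_algebra.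
From mathcomp Require Import reals.
Import Order.TTheory GRing.Theory Num.Theory.
Local Open Scope ring_scope.

Definition fibre_preserving {X : Type} (op : X -> X -> X) {k : nat}
    (mu : ('I_k -> X) -> X) : Prop :=
  forall (m : X) (x y : 'I_k -> X),
    (forall i, op (x i) (y i) = m) -> op (mu x) (mu y) = m.

Section FibrePreservation.
Context {R : realType} {X : Type} {d : X -> X -> R} {op : X -> X -> X}.
Hypotheses (d_metric : is_metric d) (op_nonexpansive : nonexpansive2 d op).

Lemma metric_ge0 (a b : X) : 0 <= d a b.
Proof.
have [d0 [dsym dtri]] := d_metric.
have := dtri a b a; rewrite (proj2 (d0 a a) erefl) (dsym b a).
by rewrite -mulr2n pmulrn_lge0.
Qed.

Lemma nonexpansive2_fibre_closed {u v : nat -> X} {a b m : X} :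
  seq_conv d u a -> seq_conv d v b ->
  (forall r, op (u r) (v r) = m) -> op a b = m.
Proof.
move=> ua vb uvm; apply/esym/(proj1 d_metric).
have := metric_ge0 m (op a b); rewrite le_eqVlt => /orP[/eqP <- // | e_gt0].
have [Nu hu] := ua _ e_gt0; have [Nv hv] := vb _ e_gt0.
set r := maxn Nu Nv.
have close : Num.max (d (u r) a) (d (v r) b) < d m (op a b).
  by rewrite gt_max hu ?hv ?leq_maxl ?leq_maxr.
by have := le_lt_trans (op_nonexpansive (u r) (v r) a b) close; rewrite uvm ltxx.
Qed.

Lemma iter_beta_fibre (k : nat) (mu : ('I_k -> X) -> X) (m : X)
    (x y : 'I_k.+1 -> X) :
  fibre_preserving op mu -> (forall i, op (x i) (y i) = m) ->
  forall r j, op (iter r (beta mu) x j) (iter r (beta mu) y j) = m.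
Proof.
move=> mu_fib xym; elim=> [|r IHr] j /=; first exact: xym.
by apply: mu_fib => i; apply: IHr.
Qed.

Lemma beta_extends_fibre_preserving {k : nat} {mu : ('I_k -> X) -> X}
    {mu' : ('I_k.+1 -> X) -> X} :
  beta_extends d mu mu' -> fibre_preserving op mu -> fibre_preserving op mu'.
Proof.
move=> ext mu_fib m x y xym.
apply: (nonexpansive2_fibre_closed (ext x ord0) (ext y ord0)) => r.
exact: iter_beta_fibre.
Qed.

End FibrePreservation.

Lemma limited_medial_fibre_preserving (X : Type) (op : X -> X -> X) :
  limited_medial op ->
  fibre_preserving op (fun z : 'I_2 -> X => op (z ord0) (z ord_max)).
Proof. by move=> lmed m x y xym; apply: lmed; apply: xym. Qed.

Theorem proposition8p8 (R : realType) (X : Type) (d : X -> X -> R)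
  (rho : R) (op : X -> X -> X)
  (mus : forall k : nat, ('I_k -> X) -> X) :
  is_metric d -> complete_metric d ->
  0 < rho -> rho < 1 ->
  is_2mean op -> nonexpansive2 d op -> coord_contractive2 d rho op ->
  limited_medial op ->
  (forall z : 'I_2 -> X, mus 2%N z = op (z ord0) (z ord_max)) ->
  (forall k : nat, (2 <= k)%N ->
     continuous_k d (mus k.+1) /\ beta_extends d (mus k) (mus k.+1)) ->
  forall (n : nat), (2 <= n)%N ->
  forall (m : X) (x y : 'I_n -> X),
    (forall i : 'I_n, op (x i) (y i) = m) ->
    op (mus n x) (mus n y) = m.
Proof.
(* Completeness, contractivity and continuity are only needed for the means
   [mus] to exist; the argument itself does not use them. *)
move=> d_metric _ _ _ _ nexp _ lmed mu2 ext.
have mus_fib k : fibre_preserving op (mus k.+2).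
  elim: k => [|k IHk].
    move=> m x y; rewrite !mu2; exact: limited_medial_fibre_preserving.
  have [_ ext_k] := ext k.+2 isT.
  exact: (beta_extends_fibre_preserving d_metric nexp ext_k IHk).
by case=> [|[|n]] // _; apply: mus_fib.
Qed.
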